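(* Let $G$ be a finite abelian group and $\mathcal{H}$ a finite dimensional complex Hilbert space with $\dim\mathcal{H}\geq 2$. In each of the following two cases there exists no $U$-covariant pure-state informationally complete observable (based on $G/H$ for any proper subgroup $H$ of $G$): (a) $U$ is a unitary representation of $G$ on $\mathcal{H}$; (b) $G$ is cyclic and $U$ is a projective unitary representation of $G$ on $\mathcal{H}$.
   Context: $\mathbb{T}$ is the group of unimodular complex numbers. A projective unitary representation of $G$ on $\mathcal{H}$ is a map $g\mapsto U(g)$ into the unitaries with $U(e)=I$ and $U(gh)=\omega(g,h)U(g)U(h)$, $\omega(g,h)\in\mathbb{T}$. An observable with finite outcome set $\Omega$ is a map $\mathsf{M}$ from $\Omega$ to positive operators on $\mathcal{H}$ with $\sum_{x\in\Omega}\mathsf{M}(x)=I$. It is pure-state informationally complete (PIC) if for any two different pure states (rank-one projections) $\varrho_1\neq\varrho_2$ there is $x\in\Omega$ with $\mathrm{tr}(\varrho_1\mathsf{M}(x))\neq\mathrm{tr}(\varrho_2\mathsf{M}(x))$. For a subgroup $H$ of $G$, $G$ acts on the set of left cosets $G/H$ by $g'\cdot gH=g'gH$; an observable $\mathsf{M}$ on $\Omega=G/H$ is $U$-covariant if $U(g)\mathsf{M}(x)U(g)^*=\mathsf{M}(g\cdot x)$ for all $g\in G$, $x\in G/H$. *)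

From HB Require Import structures.
From mathcomp Require Import all_boot all_order all_algebra all_fingroup.
From mathcomp Require Import complex reals.
Set Implicit Arguments. Unset Strict Implicit. Unset Printing Implicit Defensive.
Import Order.TTheory GRing.Theory Num.Theory.
Local Open Scope ring_scope.

Section Defs.
Variable R : realType.
Local Notation C := (R[i]).

Definition adjmx n m (A : 'M[C]_(m, n)) : 'M[C]_(n, m) := (map_mx Num.conj A)^T.

Definition unitarymx n (A : 'M[C]_n) : Prop := A *m adjmx A = 1%:M.

Definition posop n (A : 'M[C]_n) : Prop :=
  forall v : 'cV[C]_n, 0 <= (adjmx v *m A *m v) 0 0.

Definition pure_state n (P : 'M[C]_n) : Prop :=
  adjmx P = P /\ P *m P = P /\ \rank P = 1%N.

Definition proj_unitary_rep (gT : finGroupType) n (U : gT -> 'M[C]_n) : Prop :=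
  (forall g, unitarymx (U g)) /\ U 1%g = 1%:M /\
  forall g h, exists w : C, `|w| = 1 /\ U (g * h)%g = w *: (U g *m U h).

Definition unitary_rep (gT : finGroupType) n (U : gT -> 'M[C]_n) : Prop :=
  (forall g, unitarymx (U g)) /\ U 1%g = 1%:M /\
  forall g h, U (g * h)%g = U g *m U h.

(* Observable with outcome set G/H = lcosets H [set: gT]; M is indexed by
   subsets of gT but only its values on left cosets matter. *)
Definition coset_observable (gT : finGroupType) (H : {group gT}) n
    (M : {set gT} -> 'M[C]_n) : Prop :=
  (forall x, x \in lcosets H [set: gT] -> posop (M x)) /\
  \sum_(x in lcosets H [set: gT]) M x = 1%:M.

Definition PIC_coset (gT : finGroupType) (H : {group gT}) n
    (M : {set gT} -> 'M[C]_n) : Prop :=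
  forall r1 r2 : 'M[C]_n, pure_state r1 -> pure_state r2 -> r1 <> r2 ->
    exists2 x, x \in lcosets H [set: gT] & \tr (r1 *m M x) <> \tr (r2 *m M x).

(* U(g) M(x) U(g)^* = M(g . x), with g . (aH) = (g a)H = g *: (aH) *)
Definition covariant_coset (gT : finGroupType) (H : {group gT}) n
    (U : gT -> 'M[C]_n) (M : {set gT} -> 'M[C]_n) : Prop :=
  forall g x, x \in lcosets H [set: gT] ->
    U g *m M x *m adjmx (U g) = M (g *: x)%g.

End Defs.

(* The operators U(g) commute pairwise: for an ordinary representation because G is
   abelian, for a projective representation of a cyclic group <a> because each U(g)
   is a phase times a power of U(a).  Each U(g) is diagonalizable, since U(g)^#[g] is
   a nonzero scalar, so the U(g) have a common eigenbasis.  If r is a common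
   eigenvector, covariance makes tr(|r><r| M(x)) independent of the coset x, hence
   equal to 1/|G:H|.  Two independent common eigenvectors thus give two different
   pure states with the same statistics. *)
Set Warnings "-notation-overridden,-ambiguous-paths,-notation-incompatible-prefix".
From Pilot Require Import Defs.
From HB Require Import structures.
From mathcomp Require Import all_boot all_order all_algebra all_fingroup all_solvable.
From mathcomp Require Import all_field complex reals.
Import Order.TTheory GRing.Theory Num.Theory.
Local Open Scope ring_scope.
Set Implicit Arguments. Unset Strict Implicit. Unset Printing Implicit Defensive.

Lemma diagonalizable_exp_scalar (F : numClosedFieldType) n (f : 'M[F]_n.+1) N c :
  (0 < N)%N -> c != 0 -> f ^+ N = c%:M -> diagonalizable f.
Proof.
move=> N_gt0 c_neq0 fN.
have sep_XNc : separable_poly ('X^N - c%:P : {poly F}).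
  rewrite unlock; apply: Pdiv.ClosedField.root_coprimep => x.
  rewrite !rootE derivB derivXn derivC subr0 !hornerE hornerMn hornerXn subr_eq0.
  rewrite mulrn_eq0 expf_eq0 eqn0Ngt N_gt0 /= => /eqP xN.
  by apply: contra c_neq0 => /andP[_ /eqP x0]; rewrite -xN x0 expr0n eqn0Ngt N_gt0.
have min_dvd : mxminpoly f %| 'X^N - c%:P.
  apply: mxminpoly_min.
  by rewrite rmorphB /= rmorphXn /= horner_mx_X horner_mx_C fN subrr.
have [rs def_min] := closed_field_poly_normal (mxminpoly f).
rewrite (monicP (mxminpoly_monic f)) scale1r in def_min.
apply/diagonalizableP; exists rs; last by rewrite -def_min.
by rewrite -separable_prod_XsubC -def_min (dvdp_separable min_dvd).
Qed.

Lemma codiagonalizable_commuting (F : fieldType) (I : finType) n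
    (A : I -> 'M[F]_n.+1) :
  (forall i j, A i *m A j = A j *m A i) -> (forall i, diagonalizable (A i)) ->
  exists2 P, P \in unitmx & forall i, exists d, P *m A i = diag_mx d *m P.
Proof.
move=> commA diagA.
have [|P Punit /allP simP] := (codiagonalizableP [seq A i | i <- enum I]).1.
  split; first by move=> _ _ /mapP[i _ ->] /mapP[j _ ->]; rewrite /comm_mx commA.
  by move=> _ /mapP[i _ ->].
exists P => // i; have /simP/similar_diagPex[d Pd] : A i \in [seq A i | i <- enum I].
  by apply/mapP; exists i; rewrite ?mem_enum.
by exists d; apply/(similarP Punit).
Qed.

Lemma row_diag_eigen (F : fieldType) m n (P : 'M[F]_(m, n)) V d (i : 'I_m) :
  P *m V = diag_mx d *m P -> row i P *m V = d 0 i *: row i P.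
Proof. by move=> PV; rewrite -row_mul PV mul_diag_mx; apply/rowP => j; rewrite !mxE. Qed.

Lemma row_unitmx_neq0 (F : fieldType) n (P : 'M[F]_n) i :
  P \in unitmx -> row i P != 0.
Proof.
rewrite -row_free_unit rowE => /mulmx_free_eq0->.
by apply/eqP => /matrixP/(_ 0 i); rewrite !mxE !eqxx => /eqP; rewrite oner_eq0.
Qed.

Lemma row_unitmx_not_proportional (F : fieldType) n (P : 'M[F]_n) i j s :
  P \in unitmx -> i != j -> row j P != s *: row i P.
Proof.
rewrite -row_free_unit => Pfree ij.
rewrite -subr_eq0 !rowE scalemxAl -mulmxBl mulmx_free_eq0 //.
apply/eqP => /matrixP/(_ 0 j); rewrite !mxE !eqxx eq_sym (negPf ij) mulr0 subr0.
by move/eqP; rewrite oner_eq0.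
Qed.

Section PureStates.
Variable R : realType.
Local Notation C := R[i].

Lemma adjmxE m n (A : 'M[C]_(m, n)) i j : adjmx A i j = (A j i)^*.
Proof. by rewrite !mxE. Qed.

Lemma adjmxM m n p (A : 'M[C]_(m, n)) (B : 'M[C]_(n, p)) :
  adjmx (A *m B) = adjmx B *m adjmx A.
Proof. by rewrite /adjmx map_mxM trmx_mul. Qed.

Lemma adjmxZ m n a (A : 'M[C]_(m, n)) : adjmx (a *: A) = a^* *: adjmx A.
Proof. by rewrite /adjmx map_mxZ; apply/matrixP => i j; rewrite !mxE. Qed.

Lemma adjmxK m n (A : 'M[C]_(m, n)) : adjmx (adjmx A) = A.
Proof. by apply/matrixP => i j; rewrite !mxE conjCK. Qed.

Definition rnorm2 n (r : 'rV[C]_n) : C := (r *m adjmx r) 0 0.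

Lemma mulmx_adj_row n (r : 'rV[C]_n) : r *m adjmx r = (rnorm2 r)%:M.
Proof. exact: mx11_scalar. Qed.

Lemma rnorm2_eq0 n (r : 'rV[C]_n) : (rnorm2 r == 0) = (r == 0).
Proof.
apply/eqP/eqP => [|->]; last by rewrite /rnorm2 mul0mx mxE.
rewrite /rnorm2 mxE => /eqP; rewrite psumr_eq0 => [/allP r0|j _]; last first.
  by rewrite adjmxE mul_conjC_ge0.
apply/rowP => j; have /= := r0 j (mem_index_enum j).
by rewrite adjmxE mul_conjC_eq0 mxE => /eqP.
Qed.

Lemma conj_rnorm2 n (r : 'rV[C]_n) : (rnorm2 r)^* = rnorm2 r.
Proof. by rewrite /rnorm2 -adjmxE adjmxM adjmxK. Qed.

Definition row_state n (r : 'rV[C]_n) : 'M[C]_n := (rnorm2 r)^-1 *: (adjmx r *m r).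

Lemma row_stateK n (r : 'rV[C]_n) : r != 0 -> r *m row_state r = r.
Proof.
rewrite -rnorm2_eq0 => r_neq0.
by rewrite -scalemxAr mulmxA mulmx_adj_row mul_scalar_mx scalerA mulVf ?scale1r.
Qed.

Lemma row_state_pure n (r : 'rV[C]_n) : r != 0 -> pure_state (row_state r).
Proof.
move=> r_neq0; split; [|split].
- rewrite /row_state adjmxZ adjmxM adjmxK fmorphV; congr (_^-1 *: _); exact: conj_rnorm2.
- by rewrite {1}/row_state -scalemxAl -mulmxA row_stateK.
- apply/eqP; rewrite eqn_leq; apply/andP; split.
    rewrite (leq_trans (mxrank_scale _ _)) //.
    by rewrite (leq_trans (mxrankM_maxr _ _)) ?rank_leq_row.
  rewrite lt0n mxrank_eq0; apply/eqP => state0.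
  have := row_stateK r_neq0; rewrite state0 mulmx0 => r0.
  by rewrite -r0 eqxx in r_neq0.
Qed.

Lemma mxtrace_row_state n (r : 'rV[C]_n) A :
  \tr (row_state r *m A) = (rnorm2 r)^-1 * (r *m A *m adjmx r) 0 0.
Proof.
by rewrite /row_state -scalemxAl mxtraceZ -mulmxA mxtrace_mulC /mxtrace big_ord1.
Qed.

Lemma row_state_inj_proportional n (r1 r2 : 'rV[C]_n) :
  r2 != 0 -> row_state r1 = row_state r2 -> exists s, r2 = s *: r1.
Proof.
move=> r2_neq0 eq_state; rewrite -(row_stateK r2_neq0) -eq_state /row_state.
by rewrite -scalemxAr mulmxA [r2 *m _]mx11_scalar mul_scalar_mx scalerA; eexists.
Qed.

Lemma unitary_eigenvalue_norm n (V : 'M[C]_n) (r : 'rV[C]_n) mu :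
  Defs.unitarymx V -> r != 0 -> r *m V = mu *: r -> mu * mu^* = 1.
Proof.
rewrite -rnorm2_eq0 => unitV r_neq0 eigen_r.
have : (r *m V) *m adjmx (r *m V) = r *m adjmx r.
  by rewrite adjmxM mulmxA -(mulmxA r) unitV mulmx1.
rewrite eigen_r adjmxZ -scalemxAl -scalemxAr scalerA !mulmx_adj_row.
rewrite scale_scalar_mx => /matrixP/(_ 0 0); rewrite !mxE eqxx !mulr1n.
by rewrite -{2}(mul1r (rnorm2 r)); apply: mulIf.
Qed.

End PureStates.

Section CovariantObservable.
Variables (R : realType) (gT : finGroupType) (H : {group gT}) (n : nat).
Variables (U : gT -> 'M[R[i]]_n) (M : {set gT} -> 'M[R[i]]_n).
Hypothesis unitaryU : forall g, Defs.unitarymx (U g).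
Hypothesis obsM : coset_observable H M.
Hypothesis covM : covariant_coset H U M.
Local Notation cosets := (lcosets H [set: gT]).

Definition common_eigenvector (r : 'rV[R[i]]_n) :=
  r != 0 /\ forall g, exists mu, r *m U g = mu *: r.

Lemma mxtrace_row_state_covariant r x : common_eigenvector r -> x \in cosets ->
  \tr (row_state r *m M x) = #|cosets|%:R^-1.
Proof.
move=> [r_neq0 eigen_r] x_coset; pose t y := (r *m M y *m adjmx r) 0 0.
have H_coset : (H : {set gT}) \in cosets.
  by apply/lcosetsP; exists 1%g; rewrite ?inE ?lcoset1.
have t_const y : y \in cosets -> t y = t H.
  case/lcosetsP=> g _ ->; rewrite /t -covM //; have [mu eigen_g] := eigen_r g.
  rewrite !mulmxA eigen_g -scalemxAl -mulmxA -adjmxM eigen_g adjmxZ -scalemxAr.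
  rewrite -scalemxAl scalerA mulrC.
  by rewrite (unitary_eigenvalue_norm (unitaryU g) r_neq0 eigen_g) scale1r.
have sum_t : t H *+ #|cosets| = rnorm2 r.
  rewrite -sumr_const -(eq_bigr _ t_const) /t -summxE -mulmx_suml -mulmx_sumr.
  by rewrite obsM.2 mulmx1.
have cosets_neq0 : #|cosets|%:R != 0 :> R[i].
  by rewrite pnatr_eq0 -lt0n card_gt0; apply/set0Pn; exists (H : {set gT}).
have tH_neq0 : t H != 0.
  by apply: contraNneq r_neq0 => tH0; rewrite -rnorm2_eq0 -sum_t tH0 mul0rn.
rewrite mxtrace_row_state -/(t x) t_const // -sum_t -mulr_natr invfM mulrC mulrA.
by rewrite mulfV // mul1r.
Qed.

Lemma common_eigenvectors_not_PIC r1 r2 :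
  common_eigenvector r1 -> common_eigenvector r2 -> (forall s, r2 != s *: r1) ->
  ~ PIC_coset H M.
Proof.
move=> eigen_r1 eigen_r2 r12_indep PIC_M.
have state_neq : row_state r1 <> row_state r2.
  by move=> /(row_state_inj_proportional eigen_r2.1)[s r2E]; case/eqP: (r12_indep s).
have [x x_coset []] :=
  PIC_M _ _ (row_state_pure eigen_r1.1) (row_state_pure eigen_r2.1) state_neq.
by rewrite !mxtrace_row_state_covariant.
Qed.

End CovariantObservable.

Section ProjectiveRepresentation.
Variables (R : realType) (gT : finGroupType) (n : nat) (U : gT -> 'M[R[i]]_n).

Lemma unitary_rep_proj : unitary_rep U -> proj_unitary_rep U.
Proof.
case=> unitaryU [U1 UM]; do 2!split=> //.
by move=> g h; exists 1; rewrite normr1 scale1r UM.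
Qed.

Lemma unitary_rep_abelian_commute : abelian [set: gT] -> unitary_rep U ->
  forall g h, U g *m U h = U h *m U g.
Proof.
by move=> /centsP abelG [_ [_ UM]] g h; rewrite -!UM (abelG g) ?inE.
Qed.

Hypothesis projU : proj_unitary_rep U.

Lemma proj_unitary_rep_expg g k :
  exists c : R[i], `|c| = 1 /\ U (g ^+ k)%g = c *: U g ^+ k.
Proof.
have [_ [U1 UM]] := projU; elim: k => [|k [c [c1 Ugk]]].
  by exists 1; rewrite normr1 expg0 U1 scale1r expr0.
have [w [w1 UgkS]] := UM (g ^+ k)%g g.
exists (w * c); split; first by rewrite normrM w1 c1 mulr1.
by rewrite expgSr UgkS Ugk exprSr -scalemxAl scalerA mulmxE.
Qed.

Lemma proj_unitary_rep_cyclic_commute : cyclic [set: gT] ->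
  forall g h, U g *m U h = U h *m U g.
Proof.
case/cyclicP=> a genG.
have Upow g : exists k c, U g = c *: U a ^+ k.
  have /cycleP[k ->] : g \in <[a]>%g by rewrite -genG inE.
  by have [c [_ Uak]] := proj_unitary_rep_expg a k; exists k, c.
move=> g h; have [k [c ->]] := Upow g; have [l [d ->]] := Upow h.
rewrite -scalemxAl -scalemxAr -scalemxAl -scalemxAr !scalerA mulrC.
by rewrite !mulmxE -!exprD addnC.
Qed.

End ProjectiveRepresentation.

Lemma proj_unitary_rep_diagonalizable (R : realType) (gT : finGroupType) n
    (U : gT -> 'M[R[i]]_n.+1) :
  proj_unitary_rep U -> forall g, diagonalizable (U g).
Proof.
move=> projU g; have [c [c1 Ug_order]] := proj_unitary_rep_expg projU g #[g]%g.
have c_neq0 : c != 0 by rewrite -normr_eq0 c1 oner_eq0.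
apply: (@diagonalizable_exp_scalar _ _ _ #[g]%g c^-1); rewrite ?invr_eq0 //.
rewrite expg_order projU.2.1 in Ug_order.
by rewrite -scalemx1 Ug_order scalerA mulVf ?scale1r.
Qed.

Lemma commuting_proj_rep_no_covariant_PIC (R : realType) (gT : finGroupType)
    (H : {group gT}) n (U : gT -> 'M[R[i]]_n.+2) :
  proj_unitary_rep U -> (forall g h, U g *m U h = U h *m U g) ->
  ~ exists M : {set gT} -> 'M[R[i]]_n.+2,
      [/\ coset_observable H M, covariant_coset H U M & PIC_coset H M].
Proof.
move=> projU commU [M [obsM covM PIC_M]].
have [P Punit Pdiag] :=
  codiagonalizable_commuting commU (proj_unitary_rep_diagonalizable projU).
have eigen_row i : common_eigenvector U (row i P).
  split=> [|g]; first exact: row_unitmx_neq0.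
  by have [d /row_diag_eigen] := Pdiag g; exists (d 0 i).
apply: (common_eigenvectors_not_PIC projU.1 obsM covM (eigen_row 0) (eigen_row 1)) PIC_M.
by move=> s; apply: row_unitmx_not_proportional.
Qed.

Theorem proposition5 (R : realType) (gT : finGroupType) (n : nat) :
  abelian [set: gT] -> (2 <= n)%N ->
  (forall (U : gT -> 'M[R[i]]_n), unitary_rep U ->
     forall H : {group gT}, H \proper [set: gT] ->
     ~ exists M : {set gT} -> 'M[R[i]]_n,
         [/\ coset_observable H M, covariant_coset H U M & PIC_coset H M])
  /\
  (cyclic [set: gT] ->
   forall (U : gT -> 'M[R[i]]_n), proj_unitary_rep U ->
     forall H : {group gT}, H \proper [set: gT] ->
     ~ exists M : {set gT} -> 'M[R[i]]_n,
         [/\ coset_observable H M, covariant_coset H U M & PIC_coset H M]).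
Proof.
move=> abelG; case: n => [|[|n]] // _; split=> [U repU H _ | cycG U projU H _].
  apply: commuting_proj_rep_no_covariant_PIC; first exact: unitary_rep_proj.
  exact: unitary_rep_abelian_commute.
apply: commuting_proj_rep_no_covariant_PIC => //.
exact: proj_unitary_rep_cyclic_commute.
Qed.
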